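(* Let $\mathcal{D}\subseteq[0,1]$ be a two-outcome forecast domain (a non-degenerate interval, identified with the probability of the first outcome). A pooling operator $\oplus$ on $\mathcal{D}$ (a binary operator on weighted forecasts) satisfies the following six axioms if and only if there is a continuous, strictly increasing function $g:\mathcal{D}\to\mathbb{R}$ such that $\oplus=\oplus_g$ (i.e., for all weighted forecasts $\Pi_1,\dots,\Pi_m$, $\Pi_1\oplus\cdots\oplus\Pi_m=\bigoplus_{g,i=1}^m\Pi_i$): (1) Weight additivity: $\mathrm{wt}(\Pi_1\oplus\Pi_2)=\mathrm{wt}(\Pi_1)+\mathrm{wt}(\Pi_2)$ for all $\Pi_1,\Pi_2$. (2) Commutativity: $\Pi_1\oplus\Pi_2=\Pi_2\oplus\Pi_1$ for all $\Pi_1,\Pi_2$. (3) Associativity: $\Pi_1\oplus(\Pi_2\oplus\Pi_3)=(\Pi_1\oplus\Pi_2)\oplus\Pi_3$ for all $\Pi_1,\Pi_2,\Pi_3$. (4) Continuity: for all $p_1,p_2\in\mathcal{D}$, $\mathrm{pr}((p_1,w_1)\oplus(p_2,w_2))$ is a continuous function of $(w_1,w_2)$ on $\mathbb{R}_{\ge0}^2\setminus\{(0,0)\}$, with the convention $(p,w)\oplus(q,0)=(q,0)\oplus(p,w)=(p,w)$. (5) Idempotence: if $\mathrm{pr}(\Pi_1)=\mathrm{pr}(\Pi_2)$ then $\mathrm{pr}(\Pi_1\oplus\Pi_2)=\mathrm{pr}(\Pi_1)$. (6) Monotonicity: for every $w>0$ and $p_1>p_2$ in $\mathcal{D}$, the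 quantity $\mathrm{pr}((p_1,x)\oplus(p_2,w-x))$ is a strictly increasing function of $x\in(0,w)$.
   Context: A weighted forecast is a pair $\Pi=(p,w)\in\mathcal{D}\times\mathbb{R}_{>0}$, with $\mathrm{pr}(\Pi):=p$ and $\mathrm{wt}(\Pi):=w$. A pooling operator is a binary operator on weighted forecasts; when associative, $\Pi_1\oplus\cdots\oplus\Pi_m$ is well defined without parentheses. For a continuous strictly increasing $g:\mathcal{D}\to\mathbb{R}$, the quasi-arithmetic pool with respect to $g$ is \[\bigoplus_{g,\,i=1}^m (p_i,w_i):=\Big(g^{-1}\Big(\tfrac{\sum_i w_i g(p_i)}{\sum_i w_i}\Big),\ \sum_i w_i\Big).\] *)

From HB Require Import structures.
From mathcomp Require Import all_boot all_order all_algebra.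
From mathcomp Require Import all_classical all_reals all_analysis.
Set Implicit Arguments. Unset Strict Implicit. Unset Printing Implicit Defensive.
Import Order.TTheory GRing.Theory Num.Theory.
Import numFieldNormedType.Exports.
Local Open Scope classical_set_scope.
Local Open Scope ring_scope.

Section Pooling.
Variable R : realType.

Definition forecast_domain (D : set R) : Prop :=
  is_interval D /\ D `<=` `[0, 1] /\ exists x y, D x /\ D y /\ x < y.

(* A weighted forecast (p, w) with p in D and w > 0; pr = .1, wt = .2 *)
Definition wforecast (D : set R) (P : R * R) : Prop := D P.1 /\ 0 < P.2.

Definition pooling_op (D : set R) (op : R * R -> R * R -> R * R) : Prop :=
  forall P Q, wforecast D P -> wforecast D Q -> wforecast D (op P Q).

Definition pool_all (op : R * R -> R * R -> R * R) (P : R * R) (s : seq (R * R)) :=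
  foldl op P s.

(* inverse of g on D (default 0 outside g(D)) *)
Definition inv_on (D : set R) (g : R -> R) (y : R) : R :=
  xget 0 [set x | D x /\ g x = y].

Definition qa_pool (D : set R) (g : R -> R) (s : seq (R * R)) : R * R :=
  (inv_on D g ((\sum_(P <- s) P.2 * g P.1) / (\sum_(P <- s) P.2)),
   \sum_(P <- s) P.2).

Definition pool_weight_additive (D : set R) (op : R * R -> R * R -> R * R) := forall P Q, wforecast D P -> wforecast D Q ->
  (op P Q).2 = P.2 + Q.2.
Definition pool_commutative_op (D : set R) (op : R * R -> R * R -> R * R) := forall P Q, wforecast D P -> wforecast D Q ->
  op P Q = op Q P.
Definition pool_associative_op (D : set R) (op : R * R -> R * R -> R * R) :=
  forall P Q S, wforecast D P -> wforecast D Q -> wforecast D S ->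
  op P (op Q S) = op (op P Q) S.

(* pr((p1,w1) (+) (p2,w2)) extended by the zero-weight convention *)
Definition pr_ext (op : R * R -> R * R -> R * R) (p1 p2 : R) (w : R * R) : R :=
  if w.2 == 0 then p1 else if w.1 == 0 then p2 else (op (p1, w.1) (p2, w.2)).1.

Definition pool_continuous_op (D : set R) (op : R * R -> R * R -> R * R) := forall p1 p2, D p1 -> D p2 ->
  {within [set w : R * R | 0 <= w.1 /\ 0 <= w.2 /\ w != (0, 0)],
     continuous (pr_ext op p1 p2)}.

Definition pool_idempotent_op (D : set R) (op : R * R -> R * R -> R * R) := forall P Q, wforecast D P -> wforecast D Q ->
  P.1 = Q.1 -> (op P Q).1 = P.1.

Definition pool_monotone_op (D : set R) (op : R * R -> R * R -> R * R) :=
  forall w p1 p2, 0 < w -> D p1 -> D p2 -> p2 < p1 ->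
  forall x y, 0 < x -> x < y -> y < w ->
    (op (p1, x) (p2, w - x)).1 < (op (p1, y) (p2, w - y)).1.

End Pooling.

From HB Require Import structures.
From mathcomp Require Import all_boot all_order all_algebra.
From mathcomp Require Import all_classical all_reals all_analysis.
From mathcomp Require Import ring lra.
Import Order.TTheory GRing.Theory Num.Theory.
Import numFieldNormedType.Exports.
Local Open Scope classical_set_scope.
Local Open Scope ring_scope.
Set Implicit Arguments. Unset Strict Implicit. Unset Printing Implicit Defensive.

(* Fix a < b in D.  Continuity and monotonicity make x |-> pr((b, x) (+) (a, w - x)) an
   increasing bijection from [0, w] onto [a, b], so every (p, w) with p in [a, b] is uniquely
   such a pool of the two endpoints; call x the share of (p, w).  Associativity, commutativity
   and idempotence make shares add up under pooling, so the share is additive and monotone in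
   w, hence linear, and p |-> share(p, 1) pools quasi-arithmetically on [a, b].  Generators of
   nested segments differ by an increasing affine map, so normalising them at two fixed points
   of D glues them into one generator on all of D.  Conversely a quasi-arithmetic pool satisfies
   the axioms directly, continuity coming from that of g^-1 on g(D). *)

Lemma continuous_within_comp {T U V : topologicalType} (A : set T) (B : set U)
    (f : T -> U) (g : U -> V) :
  {within A, continuous f} -> (forall x, A x -> B (f x)) ->
  {within B, continuous g} -> {within A, continuous (g \o f)}.
Proof.
move=> /subspace_continuousP cf AB /subspace_continuousP cg.
apply/subspace_continuousP => x Ax.
have f_within : f @ within A (nbhs x) --> within B (nbhs (f x)).
  move=> W /= BW.
  have := cf x Ax [set y | B y -> W y] BW.
  have Anear : within A (nbhs x) A by apply: withinT.
  apply: (filterS2 _ _ Anear) => t At /= Wt; exact: Wt (AB _ At).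
by move=> W /(cg _ (AB _ Ax)) /f_within.
Qed.

Section increasing_continuity.
Variable R : realType.
Variables (A : set R) (f : R -> R).
Hypothesis f_incr : forall x y, A x -> A y -> x < y -> f x < f y.
Hypothesis f_ivp : forall x y v, A x -> A y -> f x < v < f y -> exists2 z, A z & f z = v.

Let f_le x y : A x -> A y -> x <= y -> f x <= f y.
Proof. by move=> Ax Ay; rewrite le_eqVlt => /predU1P[->//|/(f_incr Ax Ay)/ltW]. Qed.

Lemma increasing_ivp_right x e : A x -> 0 < e ->
  exists2 d, 0 < d & forall y, A y -> x < y < x + d -> f y < f x + e.
Proof.
move=> Ax e0.
have [[y Ay xy]|noright] := pselect (exists2 y, A y & x < y); last first.
  by exists 1 => // y Ay /andP[xy _]; exfalso; apply: noright; exists y.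
have [z Az [xz fz]] : exists2 z, A z & x < z /\ f z < f x + e.
  have [fy|fy] := ltP (f y) (f x + e); first by exists y.
  have [|z Az fz] := @f_ivp x y (f x + e / 2) Ax Ay; first by apply/andP; split; lra.
  exists z => //; split; last lra.
  by rewrite ltNge; apply/negP => /(f_le Az Ax); lra.
exists (z - x); first by rewrite subr_gt0.
by move=> t At /andP[xt tz]; have := f_incr At Az (_ : t < z); lra.
Qed.

Lemma increasing_ivp_left x e : A x -> 0 < e ->
  exists2 d, 0 < d & forall y, A y -> x - d < y < x -> f x - e < f y.
Proof.
move=> Ax e0.
have [[y Ay yx]|noleft] := pselect (exists2 y, A y & y < x); last first.
  by exists 1 => // y Ay /andP[_ yx]; exfalso; apply: noleft; exists y.
have [z Az [zx fz]] : exists2 z, A z & z < x /\ f x - e < f z.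
  have [fy|fy] := ltP (f x - e) (f y); first by exists y.
  have [|z Az fz] := @f_ivp y x (f x - e / 2) Ay Ax; first by apply/andP; split; lra.
  exists z => //; split; last lra.
  by rewrite ltNge; apply/negP => /(f_le Ax Az); lra.
exists (x - z); first by rewrite subr_gt0.
by move=> t At /andP[zt tx]; have := f_incr Az At (_ : z < t); lra.
Qed.

Lemma increasing_ivp_continuous : {within A, continuous f}.
Proof.
apply/subspace_continuousP => x Ax; apply/cvgrPdist_lt => e e0.
have [dR dR0 fR] := increasing_ivp_right Ax e0.
have [dL dL0 fL] := increasing_ivp_left Ax e0.
have d0 : 0 < Num.min dR dL :> R by rewrite lt_min dR0 dL0.
have [mR mL] : Num.min dR dL <= dR /\ Num.min dR dL <= dL :> R by rewrite !ge_min !lexx orbT.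
apply/nbhs_ballP; exists (Num.min dR dL) => //.
move=> y; rewrite /ball /= ltr_distlC => /andP[y1 y2] Ay.
rewrite /from_subspace ltr_distlC.
have [xy|yx|<-] := ltgtP x y; last by apply/andP; split; lra.
- have := fR y Ay ltac:(apply/andP; split; lra); have := f_incr Ax Ay xy.
  by move=> *; apply/andP; split; lra.
- have := fL y Ay ltac:(apply/andP; split; lra); have := f_incr Ay Ax yx.
  by move=> *; apply/andP; split; lra.
Qed.

End increasing_continuity.

Section quasi_arithmetic_generator.
Variable R : realType.
Variables (D : set R) (g : R -> R).
Hypothesis g_incr : forall x y, D x -> D y -> x < y -> g x < g y.

Lemma inv_onK x : D x -> inv_on D g (g x) = x.
Proof.
move=> Dx; apply: xget_unique => // y [Dy gyx].
have [yx|xy|//] := ltgtP y x.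
- by have := g_incr Dy Dx yx; rewrite gyx ltxx.
- by have := g_incr Dx Dy xy; rewrite gyx ltxx.
Qed.

Lemma pool_all_qa_pool (op : R * R -> R * R -> R * R) :
  pooling_op D op -> pool_weight_additive D op ->
  (forall x y u v, D x -> D y -> 0 < u -> 0 < v ->
     (u + v) * g (op (x, u) (y, v)).1 = u * g x + v * g y) ->
  forall P s, wforecast D P -> (forall Q, Q \in s -> wforecast D Q) ->
    pool_all op P s = qa_pool D g (P :: s).
Proof.
move=> op_wf opW g_pool P s; elim: s P => [|Q s IHs] [p w] wP ws.
  have [Dp w0] := wP.
  by rewrite /qa_pool /= !big_seq1 /= mulrAC divff ?mul1r ?inv_onK ?lt0r_neq0.
have wQ : wforecast D Q by apply: ws; rewrite mem_head.
have ws' Q' : Q' \in s -> wforecast D Q' by move=> Q's; apply: ws; rewrite inE Q's orbT.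
rewrite /pool_all /= -/(pool_all op (op (p, w) Q) s) (IHs _ (op_wf _ _ wP wQ) ws').
rewrite /qa_pool !big_cons (opW _ _ wP wQ).
case: Q wQ {ws ws'} => q u [Dq u0]; have [Dp w0] := wP.
by rewrite /= g_pool // !addrA.
Qed.

End quasi_arithmetic_generator.

Section increasing_closure.
Variable R : realType.
Variables (f : R -> R) (a b : R).
Hypothesis f_cont : {within `[a, b], continuous f}.
Hypothesis f_incr : forall x y, a < x -> x < y -> y < b -> f x < f y.

Let ivt c d v : a <= c -> c <= d -> d <= b -> f d <= v <= f c ->
  exists2 z, c <= z <= d & f z = v.
Proof.
move=> ac cd db hv.
have cf : {within `[c, d], continuous f}.
  apply: continuous_subspaceW f_cont => z /=; rewrite !in_itv /= => /andP[cz zd].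
  by apply/andP; split; lra.
have fdc : f d <= f c by case/andP: hv => *; lra.
have /(_ v) := segment_continuous_ge_surjective cd fdc cf.
by rewrite /= in_itv => /(_ hv)[z]; rewrite /= in_itv => zcd fz; exists z.
Qed.

Lemma increasing_oo_lbound u : a < u -> u < b -> f a < f u.
Proof.
move=> au ub; rewrite ltNge; apply/negP => fua.
pose m1 := a + (u - a) / 4; pose m2 := a + (u - a) / 2.
have [am1 m1m2 m2u] : [/\ a < m1, m1 < m2 & m2 < u] by rewrite /m1 /m2; split; lra.
have f12 : f m1 < f m2 by apply: f_incr; lra.
have f2u : f m2 < f u by apply: f_incr; lra.
have hv : f m1 <= f m2 <= f a by apply/andP; split; lra.
have m1b : m1 <= b by lra.
have [z /andP[az zm1] fz] := ivt (lexx a) (ltW am1) m1b hv.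
have [za|za] := eqVneq z a; first by move: fz; rewrite za; lra.
have az_lt : a < z by rewrite lt_def za az.
by have := @f_incr z m2 az_lt (_ : z < m2) (_ : m2 < b); lra.
Qed.

Lemma increasing_oo_ubound u : a < u -> u < b -> f u < f b.
Proof.
move=> au ub; rewrite ltNge; apply/negP => fbu.
pose m2 := u + (b - u) / 2; pose m3 := u + 3 * (b - u) / 4.
have [um2 m2m3 m3b] : [/\ u < m2, m2 < m3 & m3 < b] by rewrite /m2 /m3; split; lra.
have f2 : f u < f m2 by apply: f_incr; lra.
have f23 : f m2 < f m3 by apply: f_incr; lra.
have hv : f b <= f m2 <= f m3 by apply/andP; split; lra.
have am3 : a <= m3 by lra.
have [z /andP[m3z zb] fz] := ivt am3 (ltW m3b) (lexx b) hv.
have [zb_eq|zb_neq] := eqVneq z b; first by move: fz; rewrite zb_eq; lra.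
have zb_lt : z < b by rewrite lt_def eq_sym zb_neq zb.
by have := @f_incr m2 z (_ : a < m2) (_ : m2 < z) zb_lt; lra.
Qed.

Lemma increasing_oo_cc x y : a <= x -> x < y -> y <= b -> f x < f y.
Proof.
rewrite !le_eqVlt => /predU1P[ax|ax] xy /predU1P[yb|yb].
- subst x y; have [am mb] : a < (a + b) / 2 /\ (a + b) / 2 < b by split; lra.
  have := increasing_oo_lbound am mb; have := increasing_oo_ubound am mb; lra.
- by subst x; apply: increasing_oo_lbound.
- by subst y; apply: increasing_oo_ubound.
- exact: f_incr.
Qed.

End increasing_closure.

Lemma ratr_gt0_natfrac (R : realType) (q : rat) : 0 < ratr q :> R ->
  exists n k : nat, ratr q = n.+1%:R / k.+1%:R :> R.
Proof.
move=> q0; have n0 : 0 < numq q by rewrite numq_gt0 -(ltr0q R).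
move: n0 (denq_gt0 q); rewrite /ratr.
by case: (numq q) => [[|n]|n] //; case: (denq q) => [[|k]|k] // _ _; exists n, k.
Qed.

Section additive_on_positives.
Variables (R : realType) (f : R -> R).
Hypothesis fD : forall u v, 0 < u -> 0 < v -> f (u + v) = f u + f v.
Hypothesis f_ge0 : forall u, 0 < u -> 0 <= f u.

Lemma additive_pos_le u v : 0 < u -> u < v -> f u <= f v.
Proof.
move=> u0 uv; have -> : v = u + (v - u) by ring.
by rewrite fD ?subr_gt0 // lerDl f_ge0 // subr_gt0.
Qed.

Lemma additive_pos_natmul n u : 0 < u -> f (n.+1%:R * u) = n.+1%:R * f u.
Proof.
move=> u0; elim: n => [|n IHn]; first by rewrite !mul1r.
by rewrite -addn1 natrD !mulrDl !mul1r fD ?IHn // mulr_gt0.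
Qed.

Lemma additive_pos_rat (q : rat) : 0 < ratr q :> R -> f (ratr q) = ratr q * f 1.
Proof.
move=> /ratr_gt0_natfrac[n [k ->]]; set t : R := 1 / k.+1%:R.
have t0 : 0 < t by rewrite divr_gt0.
have tk : t * k.+1%:R = 1 by rewrite /t mul1r mulVf // pnatr_eq0.
have f1 : f 1 = k.+1%:R * f t by rewrite -additive_pos_natmul // mulrC tk.
have -> : n.+1%:R / k.+1%:R = n.+1%:R * t by rewrite /t mul1r.
by rewrite additive_pos_natmul // f1 mulrA -(mulrA _ t) tk mulr1.
Qed.

Lemma additive_pos_linear w : 0 < w -> f w = w * f 1.
Proof.
move=> w0; have c0 := f_ge0 ltr01; have fw0 := f_ge0 w0.
have [lt|gt|//] := ltgtP (f w) (w * f 1); exfalso.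
(* A rational [q] within [d] of [w], on the appropriate side, has [f q = q * f 1] on the
   wrong side of [f w] for monotonicity. *)
- pose d := (w * f 1 - f w) / (f 1 + 1).
  have d0 : 0 < d by rewrite /d divr_gt0 //; lra.
  have dE : d * (f 1 + 1) = w * f 1 - f w by rewrite /d divfK //; lra.
  have dw : w - d < w by lra.
  have [q] := rat_in_itvoo dw; rewrite in_itv /= => /andP[q1 q2].
  have q0 : 0 < ratr q :> R by nra.
  have := additive_pos_le q0 q2; rewrite additive_pos_rat //; nra.
- pose d := (f w - w * f 1) / (f 1 + 1).
  have d0 : 0 < d by rewrite /d divr_gt0 //; lra.
  have dE : d * (f 1 + 1) = f w - w * f 1 by rewrite /d divfK //; lra.
  have wd : w < w + d by lra.
  have [q] := rat_in_itvoo wd; rewrite in_itv /= => /andP[q1 q2].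
  have q0 : 0 < ratr q :> R by lra.
  have := additive_pos_le w0 q1; rewrite additive_pos_rat //; nra.
Qed.

End additive_on_positives.

Section pooling_axioms.
Variable R : realType.
Variables (D : set R) (op : R * R -> R * R -> R * R).
Hypothesis HD : forecast_domain D.
Hypothesis op_wf : pooling_op D op.
Hypothesis opW : pool_weight_additive D op.
Hypothesis opC : pool_commutative_op D op.
Hypothesis opA : pool_associative_op D op.
Hypothesis op_cont : pool_continuous_op D op.
Hypothesis op_idem : pool_idempotent_op D op.
Hypothesis op_mono : pool_monotone_op D op.

Definition wforecast0 (P : R * R) := D P.1 /\ 0 <= P.2.

Definition pool0 (P Q : R * R) :=
  if P.2 == 0 then Q else if Q.2 == 0 then P else op P Q.

Lemma wforecast0_wforecast P : wforecast0 P -> P.2 != 0 -> wforecast D P.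
Proof. by move=> [DP P0] Pn0; split => //; rewrite lt_def Pn0. Qed.

Lemma pool0_0l P Q : P.2 = 0 -> pool0 P Q = Q.
Proof. by rewrite /pool0 => ->; rewrite eqxx. Qed.

Lemma pool0_0r P Q : P.2 != 0 -> Q.2 = 0 -> pool0 P Q = P.
Proof. by rewrite /pool0 => /negbTE -> ->; rewrite eqxx. Qed.

Lemma pool0E P Q : P.2 != 0 -> Q.2 != 0 -> pool0 P Q = op P Q.
Proof. by rewrite /pool0 => /negbTE -> /negbTE ->. Qed.

Lemma pool0_wf P Q : wforecast0 P -> wforecast0 Q -> wforecast0 (pool0 P Q).
Proof.
rewrite /pool0 => wP wQ; case: eqP => // /eqP P0; case: eqP => // /eqP Q0.
have [DPQ PQ0] := op_wf (wforecast0_wforecast wP P0) (wforecast0_wforecast wQ Q0).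
by split => //; apply: ltW.
Qed.

Lemma pool0W P Q : wforecast0 P -> wforecast0 Q -> (pool0 P Q).2 = P.2 + Q.2.
Proof.
rewrite /pool0 => wP wQ; case: eqP => [->|/eqP P0]; first by rewrite add0r.
case: eqP => [->|/eqP Q0]; first by rewrite addr0.
exact: opW (wforecast0_wforecast wP P0) (wforecast0_wforecast wQ Q0).
Qed.

Lemma pool0W_neq0 P Q : wforecast0 P -> wforecast0 Q -> P.2 != 0 -> (pool0 P Q).2 != 0.
Proof.
move=> wP wQ P0; rewrite pool0W //; case: wP wQ => _ P_ge0 [_ Q_ge0].
by rewrite lt0r_neq0 // ltr_pwDl // lt_def P0.
Qed.

Lemma pool0A P Q S : wforecast0 P -> wforecast0 Q -> wforecast0 S ->
  pool0 P (pool0 Q S) = pool0 (pool0 P Q) S.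
Proof.
move=> wP wQ wS.
have [P0|P0] := eqVneq P.2 0; first by rewrite !(pool0_0l _ P0).
have [Q0|Q0] := eqVneq Q.2 0; first by rewrite (pool0_0l _ Q0) (pool0_0r P0 Q0).
have PQ0 := pool0W_neq0 wP wQ P0.
have [S0|S0] := eqVneq S.2 0; first by rewrite (pool0_0r Q0 S0) (pool0_0r PQ0 S0).
rewrite (pool0E P0 (pool0W_neq0 wQ wS Q0)) (pool0E PQ0 S0) !pool0E //.
by apply: opA; apply: wforecast0_wforecast.
Qed.

Lemma pool0C P Q : wforecast0 P -> wforecast0 Q -> P.2 != 0 -> pool0 P Q = pool0 Q P.
Proof.
move=> wP wQ P0.
have [Q0|Q0] := eqVneq Q.2 0; first by rewrite (pool0_0r P0 Q0) (pool0_0l _ Q0).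
by rewrite !pool0E //; apply: opC; apply: wforecast0_wforecast.
Qed.

Lemma pool0ACA P Q S T : wforecast0 P -> wforecast0 Q -> wforecast0 S -> wforecast0 T ->
  P.2 + Q.2 != 0 -> pool0 (pool0 P Q) (pool0 S T) = pool0 (pool0 P S) (pool0 Q T).
Proof.
move=> wP wQ wS wT PQ0.
rewrite (pool0A (pool0_wf wP wQ) wS wT) (pool0A (pool0_wf wP wS) wQ wT).
have [Q0|Q0] := eqVneq Q.2 0.
  have P0 : P.2 != 0 by move: PQ0; rewrite Q0 addr0.
  by rewrite (pool0_0r P0 Q0) (pool0_0r (pool0W_neq0 wP wS P0) Q0).
congr (pool0 _ T).
rewrite -(pool0C wQ wP Q0) -(pool0A wQ wP wS).
exact: pool0C wQ (pool0_wf wP wS) Q0.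
Qed.

Lemma pool0_idem p u v : D p -> 0 <= u -> 0 <= v -> pool0 (p, u) (p, v) = (p, u + v).
Proof.
move=> Dp u0 v0; rewrite /pool0 /=.
have [->|un0] := eqVneq u 0; first by rewrite add0r.
have [->|vn0] := eqVneq v 0; first by rewrite addr0.
have wu : wforecast D (p, u) by split => //=; rewrite lt_def un0.
have wv : wforecast D (p, v) by split => //=; rewrite lt_def vn0.
have := op_idem wu wv erefl; have := opW wu wv.
by case: (op (p, u) (p, v)) => /= ? ? -> ->.
Qed.

Lemma pr_ext_pool0 p1 p2 (w : R * R) : w != (0, 0) ->
  pr_ext op p1 p2 w = (pool0 (p1, w.1) (p2, w.2)).1.
Proof.
case: w => w1 w2 /= w_neq0; rewrite /pr_ext /pool0 /=.
have [w2_0|_] := eqVneq w2 0; have [w1_0|_] := eqVneq w1 0 => //.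
by move: w_neq0; rewrite w1_0 w2_0 eqxx.
Qed.

Section segment.
Variables a b : R.
Hypotheses (ab : a < b) (Da : D a) (Db : D b).

Lemma D_segment x : a <= x <= b -> D x.
Proof. by case: HD => D_itv _; apply: D_itv. Qed.

Definition mix w x := (pool0 (b, x) (a, w - x)).1.

Lemma mix0 w : mix w 0 = a.
Proof. by rewrite /mix pool0_0l. Qed.

Lemma mixw w : 0 < w -> mix w w = b.
Proof. by move=> w0; rewrite /mix pool0_0r //= ?subrr // lt0r_neq0. Qed.

Lemma mixE w x : 0 < x -> x < w -> mix w x = (op (b, x) (a, w - x)).1.
Proof. by move=> x0 xw; rewrite /mix pool0E //= lt0r_neq0 // subr_gt0. Qed.

Lemma mix_cont w : 0 < w -> {within `[0, w], continuous (mix w)}.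
Proof.
move=> w0; pose split_w x := (x, w - x).
pose Q := [set u : R * R | 0 <= u.1 /\ 0 <= u.2 /\ u != (0, 0)].
have split_cont : {within `[0, w], continuous split_w}.
  apply: continuous_subspaceT => x.
  exact: cvg_pair (cvg_id) (cvgB (cvg_cst w) cvg_id).
have split_Q x : x \in `[0, w] -> Q (split_w x).
  rewrite in_itv /= => /andP[x0 xw]; do 2 split => //=; first lra.
  by apply/eqP; case; lra.
have := continuous_within_comp split_cont split_Q (op_cont Db Da).
apply: subspace_eq_continuous => x; rewrite inE /= in_itv /= => /andP[x0 xw].
rewrite /from_subspace /mix /split_w /= pr_ext_pool0 //.
by apply/eqP; case; lra.
Qed.

Lemma mix_incr w x y : 0 < w -> 0 <= x -> x < y -> y <= w -> mix w x < mix w y.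
Proof.
move=> w0; apply: increasing_oo_cc; first exact: mix_cont.
move=> {}x {}y x0 xy yw; rewrite !mixE //; try lra.
exact: op_mono.
Qed.

Lemma mix_le w x y : 0 < w -> 0 <= x -> x <= y -> y <= w -> mix w x <= mix w y.
Proof.
by move=> w0 x0; rewrite le_eqVlt => /predU1P[->//|xy] yw; apply/ltW/mix_incr.
Qed.

Lemma mix_range w x : 0 < w -> 0 <= x <= w -> a <= mix w x <= b.
Proof.
move=> w0 /andP[x0 xw]; rewrite -{1}(mix0 w) -(mixw w0).
by rewrite !mix_le //; lra.
Qed.

Definition share p w := xget 0 [set x | 0 <= x <= w /\ mix w x = p].

Lemma share_spec p w : a <= p <= b -> 0 < w ->
  0 <= share p w <= w /\ mix w (share p w) = p.
Proof.
move=> p_ab w0; apply: (@xgetPex _ 0 [set x | 0 <= x <= w /\ mix w x = p]).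
have le0w : mix w 0 <= mix w w by rewrite mix0 mixw // ltW.
have /(_ p) := segment_continuous_le_surjective (ltW w0) le0w (mix_cont w0).
rewrite mix0 mixw // /= in_itv /= => /(_ p_ab)[x].
by rewrite in_itv /= => x_0w mixx; exists x.
Qed.

Lemma share_mix w x : 0 < w -> 0 <= x <= w -> share (mix w x) w = x.
Proof.
move=> w0 x_0w; apply: xget_unique => // y [/andP[y0 yw] mixy].
case/andP: x_0w => x0 xw.
have [xy|yx|//] := ltgtP x y.
- by have := mix_incr w0 x0 xy yw; rewrite mixy ltxx.
- by have := mix_incr w0 y0 yx xw; rewrite mixy ltxx.
Qed.

Lemma pool0_share p w : a <= p <= b -> 0 < w ->
  pool0 (b, share p w) (a, w - share p w) = (p, w).
Proof.
move=> p_ab w0; have [/andP[s0 sw] mix_s] := share_spec p_ab w0.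
have weight : (pool0 (b, share p w) (a, w - share p w)).2 = w.
  by rewrite pool0W //=; [ring | split => //=; lra].
by move: mix_s weight; rewrite /mix; case: pool0 => /= ? ? -> ->.
Qed.

Section pooled_share.
Variables (p q u v : R).
Hypotheses (p_ab : a <= p <= b) (q_ab : a <= q <= b) (u0 : 0 < u) (v0 : 0 < v).

(* Split both forecasts into their endpoint parts and regroup them by endpoint. *)
Lemma pool_mix_share : (op (p, u) (q, v)).1 = mix (u + v) (share p u + share q v).
Proof.
have [/andP[x0 xu] _] := share_spec p_ab u0.
have [/andP[y0 yv] _] := share_spec q_ab v0.
have xu' : 0 <= u - share p u by lra.
have yv' : 0 <= v - share q v by lra.
have nz : share p u + (u - share p u) != 0 by rewrite addrC subrK lt0r_neq0.
rewrite -pool0E /= ?lt0r_neq0 // -(pool0_share p_ab u0) -(pool0_share q_ab v0).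
rewrite pool0ACA // !pool0_idem //.
by rewrite /mix; congr (pool0 _ (a, _)).1; ring.
Qed.

Lemma pool_segment : a <= (op (p, u) (q, v)).1 <= b.
Proof.
have [/andP[x0 xu] _] := share_spec p_ab u0.
have [/andP[y0 yv] _] := share_spec q_ab v0.
by rewrite pool_mix_share mix_range ?addr_gt0 //; apply/andP; split; lra.
Qed.

Lemma share_pool : share (op (p, u) (q, v)).1 (u + v) = share p u + share q v.
Proof.
have [/andP[x0 xu] _] := share_spec p_ab u0.
have [/andP[y0 yv] _] := share_spec q_ab v0.
by rewrite pool_mix_share share_mix ?addr_gt0 //; apply/andP; split; lra.
Qed.

End pooled_share.

Lemma share_linear p w : a <= p <= b -> 0 < w -> share p w = w * share p 1.
Proof.
move=> p_ab; apply: additive_pos_linear => [u v u0 v0|u u0].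
  have Dp := D_segment p_ab.
  by rewrite -share_pool // op_idem.
by have [/andP[]] := share_spec p_ab u0.
Qed.

Definition segment_gen p := share p 1.

Lemma segment_gen_pool p q u v : a <= p <= b -> a <= q <= b -> 0 < u -> 0 < v ->
  (u + v) * segment_gen (op (p, u) (q, v)).1 = u * segment_gen p + v * segment_gen q.
Proof.
move=> p_ab q_ab u0 v0; rewrite /segment_gen -!share_linear ?addr_gt0 //.
  exact: share_pool.
exact: pool_segment.
Qed.

Lemma segment_gen_range p : a <= p <= b -> 0 <= segment_gen p <= 1.
Proof. by move=> p_ab; have [] := share_spec p_ab ltr01. Qed.

Lemma mix_segment_gen p : a <= p <= b -> mix 1 (segment_gen p) = p.
Proof. by move=> p_ab; have [] := share_spec p_ab ltr01. Qed.

Lemma segment_gen_incr p q : a <= p -> p < q -> q <= b -> segment_gen p < segment_gen q.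
Proof.
move=> ap pq qb; rewrite ltNge; apply/negP => gqp.
have p_ab : a <= p <= b by apply/andP; split; lra.
have q_ab : a <= q <= b by apply/andP; split; lra.
have /andP[gq0 _] := segment_gen_range q_ab; have /andP[_ gp1] := segment_gen_range p_ab.
have := mix_le ltr01 gq0 gqp gp1; rewrite !mix_segment_gen //; lra.
Qed.

End segment.

Lemma segment_gen_nested (c d c' d' y : R) :
  c < d -> D c -> D d -> c' < d' -> D c' -> D d' -> c <= c' -> d' <= d -> c' <= y <= d' ->
  segment_gen c d y =
    segment_gen c d c' + segment_gen c' d' y * (segment_gen c d d' - segment_gen c d c').
Proof.
move=> cd Dc Dd cd' Dc' Dd' cc' d'd y_cd'.
set t := segment_gen c' d' y.
have /andP[t0 t1] := segment_gen_range cd' Dc' Dd' y_cd'.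
have ymix : mix c' d' 1 t = y := mix_segment_gen cd' Dc' Dd' y_cd'.
have [t_0|tn0] := eqVneq t 0.
  by move: ymix; rewrite t_0 mix0 => <-; rewrite mul0r addr0.
have [t_1|tn1] := eqVneq t 1.
  by move: ymix; rewrite t_1 mixw // => <-; ring.
have t0' : 0 < t by rewrite lt_def tn0.
have t1' : 0 < 1 - t by rewrite subr_gt0 lt_def eq_sym tn1.
rewrite mixE // in ymix; last by rewrite lt_def eq_sym tn1.
have d'_cd : c <= d' <= d by apply/andP; split; lra.
have c'_cd : c <= c' <= d by apply/andP; split; lra.
have := segment_gen_pool cd Dc Dd d'_cd c'_cd t0' t1'.
by rewrite ymix addrC subrK mul1r => ->; ring.
Qed.

Section glue.
Variables a0 b0 : R.
Hypotheses (a0b0 : a0 < b0) (Da0 : D a0) (Db0 : D b0).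

(* Normalising at [a0] and [b0] removes the affine ambiguity of [segment_gen c d]. *)
Definition normal_gen (c d x : R) :=
  (segment_gen c d x - segment_gen c d a0) / (segment_gen c d b0 - segment_gen c d a0).

Lemma normal_gen_den_gt0 (c d : R) : D c -> D d -> c <= a0 -> b0 <= d ->
  0 < segment_gen c d b0 - segment_gen c d a0.
Proof.
move=> Dc Dd ca0 b0d; rewrite subr_gt0.
by apply: segment_gen_incr => //; have := a0b0; lra.
Qed.

Lemma normal_gen_nested (c d c' d' y : R) : c < d -> D c -> D d -> D c' -> D d' ->
  c <= c' -> c' <= a0 -> b0 <= d' -> d' <= d -> c' <= y <= d' ->
  normal_gen c d y = normal_gen c' d' y.
Proof.
move=> cd Dc Dd Dc' Dd' cc' c'a0 b0d' d'd y_cd'.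
have a0d' : a0 < d' := lt_le_trans a0b0 b0d'.
have c'b0 : c' < b0 := le_lt_trans c'a0 a0b0.
have cd' : c' < d' := le_lt_trans c'a0 a0d'.
have a0_cd' : c' <= a0 <= d' by rewrite c'a0 (ltW a0d').
have b0_cd' : c' <= b0 <= d' by rewrite (ltW c'b0) b0d'.
have nested := segment_gen_nested cd Dc Dd cd' Dc' Dd' cc' d'd.
rewrite /normal_gen (nested _ y_cd') (nested _ a0_cd') (nested _ b0_cd').
have G10 : segment_gen c d d' - segment_gen c d c' != 0.
  by rewrite subr_eq0 gt_eqF // segment_gen_incr.
set G0 := segment_gen c d c'; set G1 := segment_gen c d d'; set A := segment_gen c' d' a0.
have diffE u : G0 + u * (G1 - G0) - (G0 + A * (G1 - G0)) = (u - A) * (G1 - G0) by ring.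
by rewrite !diffE -mulf_div divff // mulr1.
Qed.

Definition gen (x : R) := normal_gen (Num.min x a0) (Num.max x b0) x.

Lemma D_min x y : D x -> D y -> D (Num.min x y).
Proof. by rewrite minEle; case: ifP. Qed.

Lemma D_max x y : D x -> D y -> D (Num.max x y).
Proof. by rewrite maxEle; case: ifP. Qed.

Lemma gen_normal_gen (c d z : R) : D c -> D d -> D z -> c <= a0 -> b0 <= d -> c <= z <= d ->
  gen z = normal_gen c d z.
Proof.
move=> Dc Dd Dz ca0 b0d /andP[cz zd]; symmetry.
apply: normal_gen_nested => //.
- by have := a0b0; lra.
- exact: D_min.
- exact: D_max.
- by rewrite le_min cz.
- by rewrite ge_min lexx orbT.
- by rewrite le_max lexx orbT.
- by rewrite ge_max zd.
- by rewrite ge_min le_max !lexx.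
Qed.

Lemma segment_cover x y : D x -> D y ->
  exists c d, [/\ D c, D d, c <= a0, b0 <= d & c <= x <= d /\ c <= y <= d].
Proof.
move=> Dx Dy; exists (Num.min (Num.min x y) a0), (Num.max (Num.max x y) b0); split.
- by apply: D_min => //; apply: D_min.
- by apply: D_max => //; apply: D_max.
- by rewrite ge_min lexx orbT.
- by rewrite le_max lexx orbT.
- by rewrite !ge_min !le_max !lexx ?orbT ?orTb.
Qed.

Lemma gen_pool x y u v : D x -> D y -> 0 < u -> 0 < v ->
  (u + v) * gen (op (x, u) (y, v)).1 = u * gen x + v * gen y.
Proof.
move=> Dx Dy u0 v0.
have [c [d [Dc Dd ca0 b0d [x_cd y_cd]]]] := segment_cover Dx Dy.
have cd : c < d by have := a0b0; lra.
have Dr : D (op (x, u) (y, v)).1.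
  by have [] := op_wf (_ : wforecast D (x, u)) (_ : wforecast D (y, v)).
have r_cd := pool_segment cd Dc Dd x_cd y_cd u0 v0.
have := segment_gen_pool cd Dc Dd x_cd y_cd u0 v0.
rewrite !(gen_normal_gen Dc Dd) // /normal_gen.
have := normal_gen_den_gt0 Dc Dd ca0 b0d.
move: (segment_gen c d b0 - _) => den den0 pool_eq.
rewrite !mulrA -!mulrDl; congr (_ / _).
by rewrite !mulrBr pool_eq; ring.
Qed.

Lemma gen_incr x y : D x -> D y -> x < y -> gen x < gen y.
Proof.
move=> Dx Dy xy.
have [c [d [Dc Dd ca0 b0d [/andP[cx xd] /andP[cy yd]]]]] := segment_cover Dx Dy.
rewrite !(gen_normal_gen Dc Dd) ?cx ?xd ?cy ?yd // /normal_gen.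
rewrite ltr_pM2r ?invr_gt0 ?normal_gen_den_gt0 // ltrBlDr subrK.
by apply: segment_gen_incr => //; have := a0b0; lra.
Qed.

Lemma gen_continuous : {within D, continuous gen}.
Proof.
apply: increasing_ivp_continuous; first exact: gen_incr.
move=> x y v Dx Dy /andP[xv vy].
have xy : x < y.
  rewrite ltNge le_eqVlt; apply/negP => /predU1P[yx|/(gen_incr Dy Dx)]; last lra.
  by move: xv vy; rewrite yx; lra.
pose t := (gen y - v) / (gen y - gen x).
have gap : 0 < gen y - gen x by lra.
have tE : t * (gen y - gen x) = gen y - v by rewrite /t divfK // lt0r_neq0.
have t0 : 0 < t by rewrite /t divr_gt0 //; lra.
have t1 : 0 < 1 - t by rewrite subr_gt0 /t ltr_pdivrMr // mul1r; lra.
exists (op (x, t) (y, 1 - t)).1.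
  by have [] := op_wf (_ : wforecast D (x, t)) (_ : wforecast D (y, 1 - t)).
have := gen_pool Dx Dy t0 t1; rewrite addrC subrK mul1r => ->.
by move: tE; rewrite mulrBr; lra.
Qed.

End glue.
End pooling_axioms.

Lemma wavg_between (R : realType) (u v A B : R) : 0 <= u -> 0 <= v -> 0 < u + v -> A <= B ->
  A <= (u * A + v * B) / (u + v) <= B.
Proof.
move=> u0 v0 uv AB; rewrite ler_pdivlMr // ler_pdivrMr //.
by apply/andP; split; nra.
Qed.

Lemma wavg_continuous (R : realType) (c1 c2 : R) (w : R * R) : w.1 + w.2 != 0 ->
  {for w, continuous (fun w : R * R => (w.1 * c1 + w.2 * c2) / (w.1 + w.2))}.
Proof.
move=> w_neq0.
have fst_cont : {for w, continuous (fun w : R * R => w.1)} by apply: cvg_fst.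
have snd_cont : {for w, continuous (fun w : R * R => w.2)} by apply: cvg_snd.
apply: continuousM; last by apply: continuousV => //; apply: cvgD.
by apply: cvgD; apply: continuousM => //; apply: cvg_cst.
Qed.

Section quasi_arithmetic_axioms.
Variable R : realType.
Variables (D : set R) (op : R * R -> R * R -> R * R) (g : R -> R).
Hypothesis HD : forecast_domain D.
Hypothesis g_cont : {within D, continuous g}.
Hypothesis g_incr : forall x y, D x -> D y -> x < y -> g x < g y.
Hypothesis op_qa : forall P s, wforecast D P -> (forall Q, Q \in s -> wforecast D Q) ->
  pool_all op P s = qa_pool D g (P :: s).

Let g_le x y : D x -> D y -> x <= y -> g x <= g y.
Proof. by move=> Dx Dy; rewrite le_eqVlt => /predU1P[->//|/(g_incr Dx Dy)/ltW]. Qed.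

Lemma inv_on_between x y t : D x -> D y -> g x <= t <= g y ->
  D (inv_on D g t) /\ g (inv_on D g t) = t.
Proof.
move=> Dx Dy /andP[xt ty]; have [D_itv _] := HD.
have xy : x <= y by rewrite leNgt; apply/negP => /(g_incr Dy Dx); lra.
have gxy : {within `[x, y], continuous g}.
  apply: continuous_subspaceW g_cont => z /=; rewrite in_itv /=; exact: D_itv.
have gx_le_gy : g x <= g y by lra.
have /(_ t) := segment_continuous_le_surjective xy gx_le_gy gxy.
rewrite /= in_itv /= xt ty => /(_ isT)[z]; rewrite /= in_itv /= => z_xy gz.
apply: (@xgetPex _ 0 [set z | D z /\ g z = t]).
by exists z; split => //; apply: D_itv z_xy.
Qed.

Definition wavg p q u v := (u * g p + v * g q) / (u + v).

Lemma wavg_inv_on p q u v : D p -> D q -> 0 <= u -> 0 <= v -> 0 < u + v ->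
  D (inv_on D g (wavg p q u v)) /\ g (inv_on D g (wavg p q u v)) = wavg p q u v.
Proof.
move=> Dp Dq u0 v0 uv; have [gpq|gqp] := leP (g p) (g q).
  by apply: (inv_on_between Dp Dq); apply: wavg_between.
apply: (inv_on_between Dq Dp); rewrite /wavg addrC [u + v]addrC.
by apply: wavg_between => //; [lra | apply: ltW].
Qed.

Lemma opE P Q : wforecast D P -> wforecast D Q ->
  op P Q = (inv_on D g (wavg P.1 Q.1 P.2 Q.2), P.2 + Q.2).
Proof.
move=> wP wQ; have := op_qa wP (_ : forall Q', Q' \in [:: Q] -> wforecast D Q').
rewrite /pool_all /qa_pool /= !big_cons !big_nil !addr0 => -> //.
by move=> Q'; rewrite inE => /eqP ->.
Qed.

Lemma qa_weight_additive : pool_weight_additive D op.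
Proof. by move=> P Q wP wQ; rewrite opE. Qed.

Lemma qa_commutative : pool_commutative_op D op.
Proof. by move=> P Q wP wQ; rewrite !opE // /wavg addrC [Q.2 + _]addrC. Qed.

Lemma qa_idempotent : pool_idempotent_op D op.
Proof.
move=> [p u] [q v] [/= Dp u0] [_ v0] /= <-.
have uv : u + v != 0 by rewrite lt0r_neq0 ?addr_gt0.
by rewrite opE //= /wavg -mulrDl mulrAC divff // mul1r inv_onK.
Qed.

Lemma qa_associative : pool_associative_op D op.
Proof.
move=> [p u] [q v] [r w] [/= Dp u0] [/= Dq v0] [/= Dr w0].
have vw0 : 0 < v + w by lra.
have uv0 : 0 < u + v by lra.
have [Dqr gqr] := wavg_inv_on Dq Dr (ltW v0) (ltW w0) vw0.
have [Dpq gpq] := wavg_inv_on Dp Dq (ltW u0) (ltW v0) uv0.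
rewrite [op (q, v) _]opE // [op (p, u) _]opE // !opE //=.
rewrite /wavg gqr gpq /wavg; congr (inv_on D g _, _); last ring.
rewrite [(v + w) * _]mulrC divfK ?lt0r_neq0 // [(u + v) * _]mulrC divfK ?lt0r_neq0 //.
by rewrite !addrA.
Qed.

Lemma qa_monotone : pool_monotone_op D op.
Proof.
move=> w p1 p2 w0 Dp1 Dp2 p21 x y x0 xy yw.
have wx : 0 < w - x by lra.
have wy : 0 < w - y by lra.
have y0 : 0 < y by lra.
rewrite !opE //=.
have sx : 0 < x + (w - x) by rewrite subrKC.
have sy : 0 < y + (w - y) by rewrite subrKC.
have [Dhx ghx] := wavg_inv_on Dp1 Dp2 (ltW x0) (ltW wx) sx.
have [Dhy ghy] := wavg_inv_on Dp1 Dp2 (ltW y0) (ltW wy) sy.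
have avg_lt : wavg p1 p2 x (w - x) < wavg p1 p2 y (w - y).
  rewrite /wavg !subrKC ltr_pM2r ?invr_gt0 //.
  by have := g_incr Dp2 Dp1 p21; nra.
rewrite ltNge; apply/negP; rewrite le_eqVlt => /predU1P[hyx|hyx].
  by move: avg_lt; rewrite -ghx -ghy hyx ltxx.
by have := g_incr Dhy Dhx hyx; rewrite ghx ghy; lra.
Qed.

Lemma inv_on_continuous : {within g @` D, continuous (inv_on D g)}.
Proof.
have [D_itv _] := HD.
apply: increasing_ivp_continuous.
  move=> _ _ [x Dx <-] [y Dy <-] gxy; rewrite !inv_onK //.
  by rewrite ltNge; apply/negP => /(g_le Dy Dx); lra.
move=> _ _ t [x Dx <-] [y Dy <-]; rewrite !inv_onK // => /andP[xt ty].
have xty : x <= t <= y by rewrite (ltW xt) (ltW ty).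
have Dt := D_itv _ _ Dx Dy _ xty.
by exists (g t); [exists t | rewrite inv_onK].
Qed.

Lemma qa_continuous : pool_continuous_op D op.
Proof.
move=> p1 p2 Dp1 Dp2.
pose F (w : R * R) := (w.1 * g p1 + w.2 * g p2) / (w.1 + w.2).
pose Q := [set w : R * R | 0 <= w.1 /\ 0 <= w.2 /\ w != (0, 0)].
have Q_sum_gt0 w : Q w -> 0 < w.1 + w.2.
  case: w => w1 w2 [/= w1_ge0 [w2_ge0 w_neq0]].
  rewrite lt_def addr_ge0 // andbT; apply: contraNneq w_neq0 => w_0.
  by apply/eqP; congr pair; lra.
have F_cont : {within Q, continuous F}.
  apply: continuous_in_subspaceT => w; rewrite inE => Qw.
  exact/wavg_continuous/lt0r_neq0/Q_sum_gt0.
have F_img w : Q w -> (g @` D) (F w).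
  move=> Qw; have [w1_ge0 [w2_ge0 _]] := Qw.
  have [Dhw ghw] := wavg_inv_on Dp1 Dp2 w1_ge0 w2_ge0 (Q_sum_gt0 _ Qw).
  by exists (inv_on D g (F w)).
have := continuous_within_comp F_cont F_img inv_on_continuous.
apply: subspace_eq_continuous => w; rewrite inE => Qw.
have w0 := Q_sum_gt0 _ Qw.
case: w Qw w0 => w1 w2 [/= w1_ge0 [w2_ge0 _]] /= w0.
rewrite /from_subspace /pr_ext /F /=.
have [w2_0|w2n0] := eqVneq w2 0.
  subst w2; rewrite addr0 in w0.
  by rewrite mul0r !addr0 mulrAC divff ?lt0r_neq0 // mul1r inv_onK.
have [w1_0|w1n0] := eqVneq w1 0.
  subst w1; rewrite add0r in w0.
  by rewrite mul0r !add0r mulrAC divff ?lt0r_neq0 // mul1r inv_onK.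
by rewrite opE //; split => //=; rewrite lt_def ?w1n0 ?w2n0.
Qed.

End quasi_arithmetic_axioms.

Theorem theorem6p6 (R : realType) (D : set R) (op : R * R -> R * R -> R * R) :
  forecast_domain D -> pooling_op D op ->
  (pool_weight_additive D op /\ pool_commutative_op D op /\ pool_associative_op D op /\
   pool_continuous_op D op /\ pool_idempotent_op D op /\ pool_monotone_op D op)
  <->
  (exists g : R -> R,
     {within D, continuous g} /\
     (forall x y, D x -> D y -> x < y -> g x < g y) /\
     (forall (P : R * R) (s : seq (R * R)),
        wforecast D P -> (forall Q, Q \in s -> wforecast D Q) ->
        pool_all op P s = qa_pool D g (P :: s))).
Proof.
move=> HD op_wf; split.
- case=> opW [opC [opA [op_cont [op_idem op_mono]]]].
  have [_ [_ [a0 [b0 [Da0 [Db0 a0b0]]]]]] := HD.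
  exists (gen op a0 b0); split; first exact: gen_continuous.
  have g_incr : forall x y, D x -> D y -> x < y -> gen op a0 b0 x < gen op a0 b0 y.
    by move=> x y; apply: gen_incr.
  split=> //; apply: pool_all_qa_pool => // x y u v; exact: gen_pool.
- case=> g [g_cont [g_incr op_qa]]; split; first exact: qa_weight_additive op_qa.
  split; first exact: qa_commutative op_qa.
  split; first exact: qa_associative op_qa.
  split; first exact: qa_continuous op_qa.
  split; first exact: qa_idempotent op_qa.
  exact: qa_monotone op_qa.
Qed.
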